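(* Let $\Sigma=\{0,1\}$. The map $\mathrm{val}_{\mathcal{F}c}$ restricted to $D=\Sigma(\Sigma\Sigma)^*\setminus\left(\Sigma^*11\Sigma^*\cup000\Sigma^*\cup101\Sigma^*\right)$ is a bijection $D\to\mathbb{Z}$.
   Context: Fibonacci numbers: $F_0=1$, $F_1=2$, $F_n=F_{n-1}+F_{n-2}$ for $n\ge2$. For a nonempty binary word $w=w_{k-1}\cdots w_0$ (digits indexed from the right, $w_0$ is the last letter), $\mathrm{val}_{\mathcal{F}c}(w)=\sum_{i=0}^{k-1}w_iF_i-w_{k-1}F_k$. *)

From mathcomp Require Import all_boot all_order all_algebra.
Set Implicit Arguments. Unset Strict Implicit. Unset Printing Implicit Defensive.
Import GRing.Theory Num.Theory.

Fixpoint fibF (n : nat) : nat :=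
  match n with
  | 0 => 1
  | 1 => 2
  | (m.+1 as p).+1 => fibF p + fibF m
  end.

(* A binary word is a seq bool in written (left-to-right) order:
   w = w_(k-1) ... w_0, so the digit of index i is the letter at
   position k-1-i of the list. *)
Definition digit (w : seq bool) (i : nat) : bool := nth false w (size w - 1 - i).

Definition valFc (w : seq bool) : int :=
  ((\sum_(i < size w) (digit w i)%:Z * (fibF i)%:Z)
   - (digit w (size w).-1)%:Z * (fibF (size w))%:Z)%R.

Definition inD (w : seq bool) : bool :=
  [&& odd (size w),
      ~~ infix [:: true; true] w,
      ~~ prefix [:: false; false; false] w
    & ~~ prefix [:: true; false; true] w].

From mathcomp Require Import all_boot all_order all_algebra.
From mathcomp Require Import zify.

(* A word of D is 0, 1, 0u with u a no-11 word of length 2m+2 not starting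
   with 00, or 100v with v a no-11 word of length 2m.  By Zeckendorf's
   theorem, the ordinary Fibonacci value zval is a bijection from no-11 words
   of length n onto [0, F_n).  Since val_Fc(0u) = zval u and
   val_Fc(100v) = zval v - F_(2m+1), the words 0u fill [F_(2m), F_(2m+2))
   exactly once and the words 100v fill [-F_(2m+1), -F_(2m-1)) (with
   F_(-1) = 1); together with 0 and -1 these intervals partition Z. *)

Local Notation F := fibF.

Lemma fibSS n : F n.+2 = F n.+1 + F n. Proof. by []. Qed.

Lemma fib0 : F 0 = 1. Proof. by []. Qed.

Lemma fibS_pred n : F n.+1 = F n + F n.-1. Proof. by case: n. Qed.

Arguments fibF : simpl never.

Lemma fib_gt0 n : 0 < F n.
Proof. by elim: n => // n IH; rewrite fibS_pred ltn_addr. Qed.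

Lemma fib_ltS n : F n < F n.+1.
Proof. by rewrite fibS_pred -addn1 leq_add2l fib_gt0. Qed.

Lemma fib_leq : {mono F : m n / m <= n}.
Proof. exact/leq_mono/(homo_ltn ltn_trans)/fib_ltS. Qed.

Lemma fib_ltn : {mono F : m n / m < n}.
Proof. exact: leqW_mono fib_leq. Qed.

Section IncreasingBracket.

Variables (f : nat -> nat) (z : nat).
Hypothesis f_incr : forall n, f n < f n.+1.

Lemma incr_bracket_exists : f 0 <= z -> exists m, f m <= z < f m.+1.
Proof.
have f_ge n : n <= f n by elim: n => // n IH; apply: leq_ltn_trans IH (f_incr n).
move=> f0z; have [N] : exists N, z < f N by exists z.+1; apply: f_ge.
elim: N => [|m IH] zf; first lia.
by case: (ltnP z (f m)) => [/IH //|fmz]; exists m; apply/andP.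
Qed.

Lemma incr_bracket_uniq m1 m2 :
  f m1 <= z < f m1.+1 -> f m2 <= z < f m2.+1 -> m1 = m2.
Proof.
have f_lt : {mono f : m n / m < n}.
  exact/leqW_mono/leq_mono/(homo_ltn ltn_trans).
move=> /andP[f1 z1] /andP[f2 z2]; apply/eqP.
rewrite eqn_leq -[m1 <= m2]ltnS -[m2 <= m1]ltnS -(f_lt m1) -(f_lt m2).
by rewrite (leq_ltn_trans f1 z2) (leq_ltn_trans f2 z1).
Qed.

End IncreasingBracket.

Fixpoint zval (s : seq bool) : nat :=
  if s is x :: t then x * F (size t) + zval t else 0.

Fixpoint no11 (s : seq bool) : bool :=
  if s is x :: t then ~~ (x && head false t) && no11 t else true.

Lemma no11E s : ~~ infix [:: true; true] s = no11 s.
Proof.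
elim: s => // x s IH; rewrite infix_consl negb_or IH /=.
by case: s {IH} => [|y t] /=; [case: x | rewrite prefix0s andbT; case: x; case: y].
Qed.

Lemma zval_true_ge t : F (size t) <= zval (true :: t).
Proof. by rewrite /= mul1n leq_addr. Qed.

Lemma zval_lt s : no11 s -> zval s < F (size s).
Proof.
suff : no11 s -> zval s < F (size s) /\ (~~ head false s -> zval s < F (size s).-1).
  by move=> lt_s /lt_s[].
elim: s => [_|[] t IH /=]; first by split=> [|_]; apply: fib_gt0.
- case/andP=> head_t /IH[_ lt_t]; rewrite mul1n fibS_pred ltn_add2l.
  by split=> //; exact: lt_t head_t.
- move=> /IH[lt_t _]; rewrite mul0n add0n.
  by split=> //; apply: ltn_trans lt_t (fib_ltS _).
Qed.

Lemma zval_inj s t : size s = size t -> no11 s -> no11 t -> zval s = zval t -> s = t.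
Proof.
elim: s t => [|x s IH] [|y t] //= [size_st] /andP[_ no11_s] /andP[_ no11_t].
have /zval_lt lt_s := no11_s; have /zval_lt := no11_t; rewrite -size_st => lt_t.
by case: x; case: y => /= eq_st; try lia; congr (_ :: _); apply: IH => //; lia.
Qed.

Lemma zval_surj n k : k < F n -> exists u, [/\ size u = n, no11 u & zval u = k].
Proof.
elim: n k => [|n IH] k lt_k; first by exists [::]; move: lt_k; rewrite fib0; case: k.
have [/IH[u [size_u no11_u val_u]] | le_k] := ltnP k (F n).
  by exists (false :: u); rewrite /= size_u val_u.
have [|u [size_u no11_u val_u]] := IH (k - F n).
  by have := fib_leq n.-1 n; rewrite leq_pred fibS_pred in lt_k *; lia.
exists (true :: u); split; rewrite /= ?size_u ?val_u ?no11_u ?andbT; try lia.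
case: u size_u val_u {no11_u} => [|[] t] // size_u val_u; subst n.
by have := zval_true_ge t; rewrite fibS_pred /= in lt_k le_k val_u; lia.
Qed.

Lemma digit_cons x s i : i < size s -> digit (x :: s) i = digit s i.
Proof.
by move=> lt_i; rewrite /digit /= subn1 /= (_ : size s - i = (size s - 1 - i).+1) //; lia.
Qed.

Lemma digit_cons_last x s : digit (x :: s) (size s) = x.
Proof. by rewrite /digit /= subn1 /= subnn. Qed.

Lemma sum_digit_fib w :
  (\sum_(i < size w) (digit w i)%:Z * (F i)%:Z = (zval w)%:Z)%R.
Proof.
elim: w => [|x s IH]; first by rewrite big_ord0.
rewrite big_ord_recr /= digit_cons_last.
under eq_bigr => i _ do rewrite digit_cons //.
by rewrite IH -/(size s); lia.
Qed.

Lemma valFc_cons x s :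
  valFc (x :: s) = ((zval (x :: s))%:Z - (x * F (size s).+1)%N%:Z)%R.
Proof. by rewrite /valFc sum_digit_fib /= digit_cons_last; lia. Qed.

Lemma valFc_false u : valFc (false :: u) = ((zval u)%:Z)%R.
Proof. by rewrite valFc_cons /=; lia. Qed.

Lemma valFc_true : valFc [:: true] = (-1)%R.
Proof. by rewrite valFc_cons /= fib0 fibS_pred fib0. Qed.

Lemma valFc_true00 v :
  valFc [:: true, false, false & v] = ((zval v)%:Z - (F (size v).+1)%:Z)%R.
Proof. by rewrite valFc_cons /= !fibSS; lia. Qed.

Variant D_spec : seq bool -> Prop :=
  | DSpec0 : D_spec [:: false]
  | DSpecN1 : D_spec [:: true]
  | DSpecPos m u of size u = m.*2.+2 & no11 u & F m.*2 <= zval u :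
      D_spec (false :: u)
  | DSpecNeg m v of size v = m.*2 & no11 v : D_spec [:: true, false, false & v].

Lemma inDP w : reflect (D_spec w) (inD w).
Proof.
rewrite /inD no11E; apply: (iffP idP).
- case: w => [|x [|y [|z r]]] //=; first by case: x => _; constructor.
  rewrite prefix0s !andbT negbK => /and4P[even_r /and4P[xy yz zr no11_r] not000 not101].
  have [m size_r] : exists m, size r = m.*2 by exists (size r)./2; lia.
  case: x y z xy yz zr not000 not101 => [] [] [] //= _ _ zr _ _.
  + exact: DSpecNeg size_r no11_r.
  + apply: (@DSpecPos m); rewrite /= ?size_r ?no11_r //.
    by have := fib_ltS m.*2; lia.
  + by apply: (@DSpecPos m); rewrite /= ?size_r ?no11_r ?zr //; lia.
- case=> [||m u size_u no11_u le_u | m v size_v no11_v] //=.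
  + rewrite size_u /= odd_double no11_u andbT /=.
    case: u size_u no11_u le_u => [|[] [|[] t]] //= [<-] /zval_lt; lia.
  + by rewrite size_v odd_double no11_v.
Qed.

Lemma fib_double_incr n : F n.*2 < F n.+1.*2.
Proof. by rewrite fib_ltn doubleS. Qed.

Lemma fib_double_pred_incr n : F n.*2.-1 < F n.+1.*2.-1.
Proof. by rewrite fib_ltn doubleS /=; case: n. Qed.

Lemma DSpecPos_inj m1 m2 u1 u2 :
  size u1 = m1.*2.+2 -> size u2 = m2.*2.+2 -> no11 u1 -> no11 u2 ->
  F m1.*2 <= zval u1 -> F m2.*2 <= zval u2 -> zval u1 = zval u2 -> u1 = u2.
Proof.
move=> size_u1 size_u2 no11_u1 no11_u2 le_u1 le_u2 eq_u.
have /zval_lt := no11_u1; have /zval_lt := no11_u2; rewrite size_u1 size_u2 => lt_u2 lt_u1.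
have eq_m : m1 = m2.
  by apply: (@incr_bracket_uniq _ (zval u1) fib_double_incr); rewrite /= doubleS; lia.
by apply: zval_inj; rewrite // size_u1 size_u2 eq_m.
Qed.

Lemma DSpecNeg_inj m1 m2 v1 v2 :
  size v1 = m1.*2 -> size v2 = m2.*2 -> no11 v1 -> no11 v2 ->
  F m1.*2.+1 - zval v1 = F m2.*2.+1 - zval v2 -> v1 = v2.
Proof.
move=> size_v1 size_v2 no11_v1 no11_v2 eq_v.
have /zval_lt := no11_v1; have /zval_lt := no11_v2; rewrite size_v1 size_v2 => lt_v2 lt_v1.
have gap m : F m.*2.+1 = F m.*2 + F m.*2.-1 by rewrite fibS_pred.
have eq_m : m1 = m2.
  (* -valFc - 1 = F_(2m+1) - zval v - 1 lies in [F_(2m-1), F_(2m+1)) *)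
  apply: (@incr_bracket_uniq _ (F m1.*2.+1 - zval v1).-1 fib_double_pred_incr).
    by rewrite doubleS /=; have := gap m1; lia.
  by rewrite eq_v doubleS /=; have := gap m2; lia.
by subst m2; apply: zval_inj; rewrite // ?size_v1 ?size_v2 //; have := fib_ltS m1.*2; lia.
Qed.

Lemma valFc_inj : {in inD &, injective valFc}.
Proof.
have pos_gt0 m u : F m.*2 <= zval u -> 0 < zval u.
  exact: leq_trans (fib_gt0 _).
have neg_lt v : no11 v -> zval v + 2 <= F (size v).+1.
  by move=> /zval_lt; have := fib_ltS (size v); lia.
(* The four shapes take values 0, -1, > 0 and < -1, so only equal shapes collide. *)
move=> w1 w2 /inDP[||m1 u1 S1 N1 L1|m1 v1 S1 N1] /inDP[||m2 u2 S2 N2 L2|m2 v2 S2 N2] //;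
  rewrite ?valFc_false ?valFc_true ?valFc_true00 /= => E.
all: try have := pos_gt0 _ _ L1; try have := pos_gt0 _ _ L2.
all: try have := neg_lt _ N1; try have := neg_lt _ N2.
all: try lia.
- by move=> *; congr (_ :: _); apply: (@DSpecPos_inj m1 m2) => //; lia.
- by move=> *; do 3 congr (_ :: _); apply: (@DSpecNeg_inj m1 m2) => //; rewrite -S1 -S2; lia.
Qed.

Lemma valFc_surj z : exists w, inD w /\ valFc w = z.
Proof.
case: z => [[|n]|[|n]].
- by exists [:: false]; rewrite valFc_false.
- have [|m /andP[le_n lt_n]] := @incr_bracket_exists _ n.+1 fib_double_incr.
    by rewrite fib0.
  have /zval_surj[u [size_u no11_u val_u]] := lt_n.
  exists (false :: u); split; last by rewrite valFc_false val_u.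
  by apply/inDP; apply: (@DSpecPos m) => //; rewrite val_u.
- by exists [:: true]; rewrite valFc_true.
- have [|m /andP[le_n lt_n]] := @incr_bracket_exists _ n.+1 fib_double_pred_incr.
    by rewrite fib0.
  rewrite doubleS /= in lt_n.
  have /zval_surj[v [size_v no11_v val_v]] : F m.*2.+1 - n.+2 < F m.*2.
    by move: le_n; rewrite /= fibS_pred; have := fib_gt0 m.*2; lia.
  exists [:: true, false, false & v]; split; first by apply/inDP; apply: DSpecNeg size_v no11_v.
  by rewrite valFc_true00 size_v val_v NegzE; lia.
Qed.

Theorem proposition2p3 :
  (forall w1 w2 : seq bool, inD w1 -> inD w2 -> valFc w1 = valFc w2 -> w1 = w2) /\
  (forall z : int, exists w : seq bool, inD w /\ valFc w = z).
Proof.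
split; last exact: valFc_surj.
by move=> w1 w2 D_w1 D_w2; apply: valFc_inj.
Qed.
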